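(* Let $G$ be a BDH graph with color classes $X,Y$, with at least three vertices and no universal vertex. Then $x\in X$ is a cut-vertex of $G$ if and only if $(\{x\},N(x))\in\mathcal{B}(G)$. Analogously, $y\in Y$ is a cut-vertex of $G$ if and only if $(N(y),\{y\})\in\mathcal{B}(G)$.
   Context: A biclique of a bipartite graph is written as the pair $(U,W)$ of its shores, $U\subseteq X$, $W\subseteq Y$, with every vertex of $U$ adjacent to every vertex of $W$; $\mathcal{B}(G)$ is the set of inclusion-wise maximal bicliques. A graph is distance hereditary if distances in every connected induced subgraph equal distances in the graph; BDH means bipartite distance hereditary (equivalently: bipartite, no induced chordless cycle of length $\ge 6$, no induced domino, where a domino is $C_6$ plus a chord between antipodal vertices). A universal vertex is adjacent to all vertices of the opposite color class. *)

From mathcomp Require Import all_boot.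
Set Implicit Arguments. Unset Strict Implicit. Unset Printing Implicit Defensive.

Section Graphs.
Variable T : finType.
Variable e : rel T.

Definition simple_graph : Prop := symmetric e /\ irreflexive e.

Definition induced (S : {set T}) : rel T :=
  [rel u v | [&& u \in S, v \in S & e u v]].

Definition dist_le (S : {set T}) (x y : T) (k : nat) : Prop :=
  exists p : seq T, [/\ size p <= k, path (induced S) x p & last x p = y].

Definition is_dist (S : {set T}) (x y : T) (d : nat) : Prop :=
  dist_le S x y d /\ forall k, dist_le S x y k -> d <= k.

Definition connected_on (S : {set T}) : Prop :=
  forall x y, x \in S -> y \in S -> connect (induced S) x y.

Definition connected_graph : Prop := connected_on setT.

Definition distance_hereditary : Prop :=
  connected_graph /\
  forall S : {set T}, connected_on S ->
    forall x y d, x \in S -> y \in S -> (is_dist setT x y d <-> is_dist S x y d).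

Definition bipartite_with (X : {set T}) : Prop :=
  forall u v, e u v -> (u \in X) != (v \in X).

Definition BDH (X : {set T}) : Prop :=
  simple_graph /\ bipartite_with X /\ distance_hereditary.

Definition nbhd (v : T) : {set T} := [set w | e v w].

Definition universal (X : {set T}) (v : T) : Prop :=
  forall w, (w \in X) != (v \in X) -> e v w.

Definition cut_vertex (v : T) : Prop :=
  exists u w, [/\ u != v, w != v, connect (induced setT) u w
                & ~~ connect (induced [set~ v]) u w].

Definition biclique (X U W : {set T}) : Prop :=
  [/\ U \subset X, W \subset ~: X & forall u w, u \in U -> w \in W -> e u w].

Definition maximal_biclique (X U W : {set T}) : Prop :=
  biclique X U W /\
  forall U' W', biclique X U' W' -> U \subset U' -> W \subset W' ->
    U' = U /\ W' = W.

End Graphs.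

From mathcomp Require Import all_boot zify.
From Stdlib Require Import Classical.
Set Implicit Arguments. Unset Strict Implicit. Unset Printing Implicit Defensive.

(** Both conditions say that no vertex [x' <> x] dominates [x], i.e. has
   [N(x) ⊆ N(x')]; for the biclique this is immediate.  If [x'] dominates [x],
   any walk through [x] can be rerouted through [x'], so [x] is no cut-vertex.
   Conversely, if [G - x] is connected, pick [x' <> x] maximising
   [|N(x') ∩ N(x)|] and suppose [y ∈ N(x)] is not adjacent to [x'].  For a
   common neighbour [y'] of [x, x'], distance heredity in [G - x] yields [z]
   adjacent to [y] and [y']; by maximality some [y'' ∈ N(x) ∩ N(x')] is not
   adjacent to [z].  Then [y] and [y''] are at distance 2 in [G] (through [x])
   but not in the subgraph induced by the path [y z y' x' y'']. *)

Section Graph.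
Variables (T : finType) (e : rel T).
Hypotheses (esym : symmetric e) (eirr : irreflexive e).

Definition dominated (x : T) : Prop :=
  exists2 x', x' != x & nbhd e x \subset nbhd e x'.

Lemma induced_sym S : symmetric (induced e S).
Proof. by move=> u v; rewrite /induced /= esym andbCA. Qed.

Lemma connect_neq_nbr S a b :
  a != b -> connect (induced e S) a b -> exists2 c, c \in S & e a c.
Proof.
move=> ab /connectP [[|c p] /= pth lst]; first by rewrite lst eqxx in ab.
by case/andP: pth => /and3P [_ cS ac] _; exists c.
Qed.

Lemma exists_nbr x : connected_graph e -> 1 < #|T| -> exists y, e x y.
Proof.
move=> conn T2; have : 0 < #|[set~ x]| by rewrite cardsC1; lia.
case/card_gt0P => u; rewrite in_setC1 eq_sym => xu.
have [c _ xc] := connect_neq_nbr xu (conn x u (in_setT x) (in_setT u)).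
by exists c.
Qed.

Lemma path_connected_on a p : path e a p -> connected_on e [set v in a :: p].
Proof.
move=> pth; set S := [set v in a :: p].
have Spth : path (induced e S) a p.
  have allS : all [in S] (a :: p) by apply/allP => v vp; rewrite inE.
  by apply: (sub_in_path _ allS pth) => u v uS vS uv; rewrite /induced /= uS vS.
have toa v : v \in S -> connect (induced e S) a v.
  by rewrite inE; apply: path_connect.
move=> u v uS vS; apply: connect_trans (toa v vS).
by rewrite (sym_connect_sym (induced_sym S)) toa.
Qed.

Lemma dominated_connect_avoid x x' a b :
    x' != x -> nbhd e x \subset nbhd e x' -> a != x -> b != x ->
  connect (induced e setT) a b -> connect (induced e [set~ x]) a b.
Proof.
move=> x'x sub ax bx /connectP [p pth lst].
pose f u := if u == x then x' else u.
have fK u : u != x -> f u = u by rewrite /f => /negbTE ->.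
(* an edge at [x] is an edge at [x'] since [x'] dominates [x] *)
have f_edge u v : induced e setT u v -> induced e [set~ x] (f u) (f v).
  rewrite /induced /= !in_setT !in_setC1 /f /= => uv.
  case: (u =P x) uv => [-> | /eqP ux] uv; case: (v =P x) uv => [-> | /eqP vx] uv;
    rewrite ?eqxx ?x'x ?(negbTE ux) ?(negbTE vx) //=.
  - by rewrite eirr in uv.
  - by move: (subsetP sub v); rewrite !inE; apply.
  - by rewrite esym; move: (subsetP sub u); rewrite !inE esym; apply.
apply/connectP; exists (map f p); first by rewrite -(fK a ax) (homo_path f_edge).
by rewrite -(fK a ax) last_map -lst fK.
Qed.

Lemma dominated_not_cut_vertex x : dominated x -> ~ cut_vertex e x.
Proof.
case=> x' x'x sub [u [w [ux wx cuw]]].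
by rewrite (dominated_connect_avoid x'x sub ux wx cuw).
Qed.

Lemma path_nonadj_size (S : {set T}) u v p : u != v -> ~~ e u v ->
  path (induced e S) u p -> last u p = v -> 1 < size p.
Proof.
move=> uv nuv; case: p => [|a [|b p]] //= pth lst.
- by rewrite lst eqxx in uv.
- by move: pth; rewrite /induced /= lst (negbTE nuv) !andbF.
Qed.

Lemma dist_le2_common_nbr (S : {set T}) u v :
  u != v -> ~~ e u v -> dist_le e S u v 2 -> exists2 c, c \in S & e u c && e c v.
Proof.
move=> uv nuv [p [size_p pth lst]]; have := path_nonadj_size uv nuv pth lst.
case: p size_p pth lst => [|c [|d [|? ?]]] //= _.
by case/and3P => /and3P [_ cS uc] /and3P [_ _ cd] _ <- _; exists c; rewrite ?uc.
Qed.

Lemma is_dist_two (S : {set T}) u c v : u != v -> ~~ e u v ->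
  u \in S -> c \in S -> v \in S -> e u c -> e c v -> is_dist e S u v 2.
Proof.
move=> uv nuv uS cS vS uc cv; split=> [|k [p [size_p pth lst]]].
  by exists [:: c; v]; split; rewrite //= /induced /= uS cS vS uc cv.
exact: leq_trans (path_nonadj_size uv nuv pth lst) size_p.
Qed.

Lemma bipartite_setC X : bipartite_with e X -> bipartite_with e (~: X).
Proof. by move=> bip u v /bip; rewrite !inE; case: (u \in X); case: (v \in X). Qed.

Lemma biclique_transpose X U W : biclique e X U W <-> biclique e (~: X) W U.
Proof.
rewrite /biclique setCK.
by split=> [] [UX WX UW]; split=> // u w uU wW; rewrite esym UW.
Qed.

Lemma maximal_biclique_transpose X U W :
  maximal_biclique e X U W <-> maximal_biclique e (~: X) W U.
Proof.
rewrite /maximal_biclique biclique_transpose.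
split=> [] [bUW maxUW]; split=> // U' W'.
  by rewrite -biclique_transpose => /maxUW maxW sW sU; case: (maxW sU sW).
by move=> /biclique_transpose /maxUW maxU sU sW; case: (maxU sW sU).
Qed.

Section Bipartite.
Variable X : {set T}.
Hypothesis bip : bipartite_with e X.

Lemma bipartite_nbr_side u v : e u v -> (v \in X) = ~~ (u \in X).
Proof. by move/bip; case: (u \in X); case: (v \in X). Qed.

Lemma bipartite_triangle_free x u v : e x u -> e x v -> ~~ e u v.
Proof.
move=> xu xv; apply/negP => /bipartite_nbr_side.
by rewrite (bipartite_nbr_side xu) (bipartite_nbr_side xv); case: (x \in X).
Qed.

Lemma maximal_star_biclique x y : x \in X -> e x y ->
  maximal_biclique e X [set x] (nbhd e x) <-> ~ dominated x.
Proof.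
move=> xX xy.
have Nx_side w : w \in nbhd e x -> w \in ~: X.
  by rewrite !inE => /bipartite_nbr_side ->; rewrite xX.
split=> [[_ maxx] [x' x'x sub] | undom].
  have x'y : e x' y by move: (subsetP sub y); rewrite !inE; apply.
  have x'X : x' \in X.
    move: (bipartite_nbr_side xy) (bipartite_nbr_side x'y) => ->.
    by rewrite xX; case: (x' \in X).
  have b2 : biclique e X [set x; x'] (nbhd e x).
    split; first by apply/subsetP => t; rewrite !inE => /orP [] /eqP ->.
      by apply/subsetP.
    move=> u w; rewrite !inE => /orP [] /eqP -> // xw.
    by move: (subsetP sub w); rewrite !inE; apply.
  have [E _] := maxx _ _ b2 (subsetUl _ _) (subxx _).
  by move: (set22 x x'); rewrite E inE (negbTE x'x).
split=> [|U W [UX WX UW] sU sW].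
  split; [by rewrite sub1set | by apply/subsetP | by move=> u w; rewrite !inE => /eqP ->].
have xU : x \in U by rewrite -sub1set.
split; apply/eqP; rewrite eqEsubset ?sU ?sW andbT.
  apply/subsetP => t tU; rewrite inE; apply/contraT => tx; case: undom.
  exists t => //; apply/subsetP => w /(subsetP sW) wW; rewrite inE.
  exact: UW.
by apply/subsetP => w wW; rewrite inE; apply: UW.
Qed.

Section DistanceHereditary.
Hypothesis DH : distance_hereditary e.

Lemma dh_common_nbr S u c v : connected_on e S -> u \in S -> v \in S ->
  u != v -> ~~ e u v -> e u c -> e c v -> exists2 a, a \in S & e u a && e a v.
Proof.
move=> conS uS vS uv nuv uc cv.
have d2 := is_dist_two uv nuv (in_setT u) (in_setT c) (in_setT v) uc cv.
by have [dS _] := (DH.2 S conS u v 2 uS vS).1 d2; apply: dist_le2_common_nbr dS.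
Qed.

(* Distance heredity puts a common neighbour of [y] and [y''] on the path
   [y z y' x' y''] itself, which forces one of the two chords. *)
Lemma path5_chord y z y' x' y'' c : e y z -> e z y' -> e y' x' -> e x' y'' ->
    y != y'' -> ~~ e y y' -> ~~ e y y'' -> e y c -> e c y'' ->
  e y x' || e z y''.
Proof.
move=> yz zy' y'x' x'y'' yy'' nyy' nyy'' yc cy''.
pose S := [set v in [:: y; z; y'; x'; y'']].
have conS : connected_on e S by apply: path_connected_on; rewrite /= yz zy' y'x' x'y''.
have [||a] := dh_common_nbr conS _ _ yy'' nyy'' yc cy''; rewrite ?inE ?eqxx ?orbT //.
case/or4P => [| | | /orP []] /eqP -> /andP [ya ay''].
- by rewrite eirr in ya.
- by rewrite ay'' orbT.
- by rewrite ya in nyy'.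
- by rewrite ya.
- by rewrite eirr in ay''.
Qed.

Lemma max_common_nbhd_dominates x x' : connected_on e [set~ x] -> x' != x ->
    0 < #|nbhd e x' :&: nbhd e x| ->
    (forall z, z != x -> #|nbhd e z :&: nbhd e x| <= #|nbhd e x' :&: nbhd e x|) ->
  nbhd e x \subset nbhd e x'.
Proof.
move=> conn x'x /card_gt0P [y' /setIP []] x'y' xy' maxx'.
rewrite !inE in x'y' xy'.
have nbr_avoid v : e x v -> v \in [set~ x].
  by rewrite in_setC1; apply: contraTneq => ->; rewrite eirr.
apply/subsetP => y; rewrite !inE => xy; apply/contraT => nx'y.
have neq_y v : e x' v -> y != v by apply: contraTneq => <-.
have yx : e y x by rewrite esym.
have [z zx /andP [yz zy']] := dh_common_nbr conn (nbr_avoid y xy) (nbr_avoid y' xy')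
  (neq_y y' x'y') (bipartite_triangle_free xy xy') yx xy'.
have [y'' /setIP [x'y'' xy''] zy''] :
    exists2 y'', y'' \in nbhd e x' :&: nbhd e x & ~~ e z y''.
  apply/exists_inP; rewrite -negb_forall_in; apply/negP => /forall_inP common_z.
  have: nbhd e x' :&: nbhd e x \proper nbhd e z :&: nbhd e x.
    apply/properP; split.
      apply/subsetP => t tI; case/setIP: (tI) => _ xt.
      by rewrite inE xt andbT inE common_z.
    by exists y; rewrite /nbhd !inE ?(esym z) ?yz ?xy ?(negbTE nx'y).
  by move/proper_card; rewrite ltnNge maxx' //; rewrite in_setC1 in zx.
rewrite !inE in x'y'' xy''.
have y'x' : e y' x' by rewrite esym.
have := path5_chord yz zy' y'x' x'y'' (neq_y _ x'y'')
  (bipartite_triangle_free xy xy') (bipartite_triangle_free xy xy'') yx xy''.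
by rewrite (esym y x') (negbTE nx'y) (negbTE zy'').
Qed.

Lemma connected_avoid_dominated x :
  3 <= #|T| -> connected_on e [set~ x] -> dominated x.
Proof.
move=> card3 conn; have [y0 xy0] := exists_nbr x DH.1 (ltnW card3).
have [w] : exists w, w \notin [set x; y0].
  have le2 : #|[set x; y0]| <= 2 by rewrite cards2; case: (x != y0).
  have : 0 < #|~: [set x; y0]| by move: (cardsC [set x; y0]); lia.
  by case/card_gt0P => w; rewrite inE; exists w.
rewrite !inE => /norP [wx wy0].
have y0x : y0 != x by apply: contraTneq xy0 => ->; rewrite eirr.
have [c cx y0c] : exists2 c, c \in [set~ x] & e y0 c.
  by apply: connect_neq_nbr (conn y0 w _ _); rewrite 1?eq_sym ?in_setC1.
rewrite in_setC1 in cx.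
have [x' x'x maxx'] := arg_maxnP (fun z => #|nbhd e z :&: nbhd e x|) (P := predC1 x) cx.
exists x' => //; apply: max_common_nbhd_dominates => //.
apply: leq_trans (maxx' c cx); apply/card_gt0P; exists y0.
by rewrite /nbhd !inE xy0 esym y0c.
Qed.

Lemma cut_vertex_undominated x : 3 <= #|T| -> cut_vertex e x <-> ~ dominated x.
Proof.
move=> card3; split=> [cut /dominated_not_cut_vertex // | undom].
apply: NNPP => ncut; apply/undom/connected_avoid_dominated => // u w.
rewrite !in_setC1 => ux wx; apply/negPn/negP => nuw; apply: ncut.
by exists u, w; split=> //; apply: DH.1; rewrite in_setT.
Qed.

End DistanceHereditary.

End Bipartite.

End Graph.

Theorem lemma3 (T : finType) (e : rel T) (X : {set T}) :
  BDH e X -> 3 <= #|T| -> (forall v, ~ universal e X v) ->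
  (forall x, x \in X ->
     (cut_vertex e x <-> maximal_biclique e X [set x] (nbhd e x))) /\
  (forall y, y \in ~: X ->
     (cut_vertex e y <-> maximal_biclique e X (nbhd e y) [set y])).
Proof.
move=> [[esym eirr] [bip DH]] card3 _.
have nbr v : exists w, e v w := exists_nbr v DH.1 (ltnW card3).
split=> [x xX | y yY]; rewrite (cut_vertex_undominated esym eirr bip DH _ card3).
  have [w xw] := nbr x.
  by rewrite (maximal_star_biclique bip xX xw).
have [w yw] := nbr y.
rewrite maximal_biclique_transpose //.
by rewrite (maximal_star_biclique (bipartite_setC bip) yY yw).
Qed.
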